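(* For every $y_0\in Y$ and every $\theta\ge0$, $$\bar d^*(\theta,y_0)=d^*(\theta,y_0)\le k^*(\theta,y_0).$$
   Context: Let $Y\subset\mathbb{R}^m$ be nonempty compact, $U_0$ a compact metric space, $U(\cdot):Y\rightsquigarrow U_0$ upper semicontinuous and compact-valued, and $f:\mathbb{R}^m\times U_0\to\mathbb{R}^m$, $k:\mathbb{R}^m\times U_0\to\mathbb{R}$ continuous. Put $A(y):=\{u\in U(y): f(y,u)\in Y\}$ and $G:=\{(y,u):y\in Y,\ u\in A(y)\}$. Standing assumption: $A(y)\ne\emptyset$ for all $y\in Y$. Measure spaces: - $\mathcal P(G)$ denotes the Borel probability measures on $G$ and $\mathcal M_+(G)$ the finite nonnegative Borel measures on $G$. - $W:=\{\gamma\in\mathcal P(G):\int_G(\varphi(f(y,u))-\varphi(y))\,d\gamma=0\ \forall\varphi\in C(Y)\}$. - $\Omega(y_0)$ is the set of $(\gamma,\xi)\in\mathcal P(G)\times\mathcal M_+(G)$ with $\gamma\in W$ and $\int_G(\varphi(y_0)-\varphi(y))\,\gamma(dy,du)+\int_G(\varphi(f(y,u))-\varphi(y))\,\xi(dy,du)=0$ for all $\varphi\in C(Y)$. Perturbed problems, for $\theta\ge0$: - $k^*(\theta,y_0):=\inf_{(\gamma,\xi)\in\Omega(y_0)}\left\{\int_Gk(y,u)\,\gamma(dy,du)+\theta\,\xi(G)\right\}$. - $d^*(\theta,y_0):=\sup\mu$, over triples $(\mu,\psi,\eta)\in\mathbb{R}\times C(Y)\times C(Y)$ such that for all $(y,u)\in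 G$: $$k(y,u)+\psi(y_0)-\psi(y)+\eta(f(y,u))-\eta(y)-\mu\ge0,\qquad\psi(f(y,u))-\psi(y)\ge-\theta.$$ - $\bar d^*(\theta,y_0):=\sup\psi(y_0)$, over pairs $(\psi,\eta)\in C(Y)\times C(Y)$ such that for all $(y,u)\in G$: $$k(y,u)-\psi(y)+\eta(f(y,u))-\eta(y)\ge0,\qquad\psi(f(y,u))-\psi(y)\ge-\theta.$$ *)

From HB Require Import structures.
From mathcomp Require Import all_boot all_order all_algebra.
From mathcomp Require Import all_classical all_reals all_analysis.
Set Implicit Arguments. Unset Strict Implicit. Unset Printing Implicit Defensive.
Import Order.TTheory GRing.Theory Num.Theory.
Import numFieldNormedType.Exports.
Local Open Scope classical_set_scope.
Local Open Scope ring_scope.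

Section Defs.
Variables (R : realType) (m : nat) (U0 : pseudoPMetricType R).

Definition St := 'rV[R]_m.
Definition X := (St * U0)%type.

Definition BX := g_sigma_algebraType (@open X).

Definition usc_on (Y : set St) (U : St -> set U0) :=
  forall y, Y y -> forall V : set U0, open V -> U y `<=` V ->
    \forall y' \near y, Y y' -> U y' `<=` V.

Definition contY (Y : set St) (phi : St -> R) := {within Y, continuous phi}.

Variables (Y : set St) (U : St -> set U0) (f : X -> St) (k : X -> R).

Definition Aset (y : St) : set U0 := [set u | U y u /\ Y (f (y, u))].
Definition Gset : set BX := [set p | Y p.1 /\ Aset p.1 p.2].

(* P(G): Borel probability measures on G, seen as Borel probability
   measures on R^m x U0 carried by G *)
Definition probG (g : probability BX R) := g (~` Gset) = 0%E.
Definition finG (xi : {finite_measure set BX -> \bar R}) := xi (~` Gset) = 0%E.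

Definition inW (g : probability BX R) :=
  probG g /\
  forall phi, contY Y phi ->
    (\int[g]_(p in Gset) (phi (f p) - phi p.1)%:E = 0)%E.

Definition inOmega (y0 : St) (g : probability BX R)
    (xi : {finite_measure set BX -> \bar R}) :=
  inW g /\ finG xi /\
  forall phi, contY Y phi ->
    (\int[g]_(p in Gset) (phi y0 - phi p.1)%:E
     + \int[xi]_(p in Gset) (phi (f p) - phi p.1)%:E = 0)%E.

Definition kstar (theta : R) (y0 : St) : \bar R :=
  ereal_inf [set z | exists (g : probability BX R)
                            (xi : {finite_measure set BX -> \bar R}),
     inOmega y0 g xi /\
     z = (\int[g]_(p in Gset) (k p)%:E + theta%:E * xi Gset)%E].

Definition dstar (theta : R) (y0 : St) : \bar R :=
  ereal_sup [set mu%:E | mu in [set mu : R | exists psi eta,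
     contY Y psi /\ contY Y eta /\
     forall p : X, Gset p ->
       0 <= k p + psi y0 - psi p.1 + eta (f p) - eta p.1 - mu /\
       - theta <= psi (f p) - psi p.1]].

Definition dbarstar (theta : R) (y0 : St) : \bar R :=
  ereal_sup [set (psi y0)%:E | psi in [set psi : St -> R | exists eta,
     contY Y psi /\ contY Y eta /\
     forall p : X, Gset p ->
       0 <= k p - psi p.1 + eta (f p) - eta p.1 /\
       - theta <= psi (f p) - psi p.1]].

End Defs.

(* The substitution psi |-> psi - psi y0 + mu maps the feasible triples of d*
   onto the feasible pairs of dbar* with psi y0 = mu, so the two suprema agree.
   For weak duality take a feasible (mu, psi, eta) and (gamma, xi) in Omega(y0).
   Integrating the first constraint against gamma over G (closed, hence Borel,
   and compact, so every integrand is bounded) and using gamma in W gives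
   mu <= int k dgamma + int (psi y0 - psi) dgamma.  The Omega(y0) identity turns
   the last integral into - int (psi o f - psi) dxi, which the second constraint
   bounds by theta xi(G). *)

From mathcomp Require Import all_boot all_order all_algebra.
From mathcomp Require Import all_classical all_reals all_analysis.
From mathcomp Require Import lra.
Set Implicit Arguments. Unset Strict Implicit.
Import Order.TTheory GRing.Theory Num.Theory.
Import numFieldNormedType.Exports.
Local Open Scope classical_set_scope.
Local Open Scope ring_scope.

Lemma compact_continuous_bounded (R : realType) (T : topologicalType)
    (A : set T) (phi : T -> R) :
  compact A -> {within A, continuous phi} ->
  exists M, forall x, A x -> `|phi x| <= M.
Proof.
move=> cA cphi; have [M [_ HM]] := compact_bounded (continuous_compact cphi cA).
by exists (M + 1) => x Ax; apply: (HM (M + 1)); [rewrite ltrDl | exists x].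
Qed.

Lemma probability_setC0 d (T : measurableType d) (R : realType)
    (P : probability T R) (A : set T) :
  measurable A -> P (~` A) = 0%E -> P A = 1%E.
Proof.
move=> mA PAc0; have := probability_setT P.
rewrite -(setUCr A) measureU //; [|exact: measurableC|exact: setICr].
by move=> <-; rewrite -[LHS]adde0; congr (_ + _); symmetry; exact: PAc0.
Qed.

Section ProductSpace.
Variables (R : realType) (m : nat) (U0 : pseudoPMetricType R).
Local Notation X := (@X R m U0).
Local Notation BX := (@BX R m U0).

Lemma measurable_open (A : set BX) : open (A : set X) -> measurable A.
Proof. exact: sub_sigma_algebra. Qed.

Lemma measurable_closed (A : set BX) : closed (A : set X) -> measurable A.
Proof.
move=> clA; rewrite -[A]setCK; apply: measurableC.
by apply: measurable_open; exact: closed_openC.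
Qed.

Lemma measurable_fun_comp_within (T : topologicalType) (D : set BX) (h : X -> T)
    (A : set T) (phi : T -> R) :
  measurable D -> continuous h -> (forall p, D p -> A (h p)) ->
  {within A, continuous phi} -> measurable_fun D (phi \o h).
Proof.
move=> mD ch DA cphi.
apply: (measurability _ (measurable_realfun.RGenOpens.measurableE R)).
move=> _ [_ [a [b ->] <-]].
have /open_subspaceP[V oV VA] : open (phi @^-1` `]a, b[%classic : set (subspace A)).
  by move/continuousP: cphi; apply; exact: interval_open.
have -> : D `&` (phi \o h) @^-1` `]a, b[%classic = D `&` h @^-1` V.
  apply/seteqP; split=> p [Dp hp]; split => //.
  - have : (phi @^-1` `]a, b[%classic `&` A) (h p) by split => //; exact: DA.
    by rewrite -VA => -[].
  - have : (V `&` A) (h p) by split => //; exact: DA.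
    by rewrite VA => -[].
apply: measurableI => //; apply: measurable_open.
by move/continuousP: ch; apply.
Qed.

Lemma integrable_bounded (mu : {finite_measure set BX -> \bar R}) (D : set BX)
    (F : X -> R) (M : R) :
  measurable D -> measurable_fun D F -> (forall p, D p -> `|F p| <= M) ->
  mu.-integrable D (fun p => (F p)%:E).
Proof.
move=> mD mF bF; apply: measurable_bounded_integrable => //.
  by have := fin_num_measure mu D mD; rewrite fin_numElt => /andP[_ ->].
exists M; split; first exact: num_real.
by move=> M' MM' p Dp; exact: le_trans (bF p Dp) (ltW MM').
Qed.

Lemma usc_graph_closed (Y : set 'rV[R]_m) (U : 'rV[R]_m -> set U0) :
  closed Y -> usc_on Y U -> (forall y, Y y -> closed (U y)) ->
  closed [set p : 'rV[R]_m * U0 | Y p.1 /\ U p.1 p.2].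
Proof.
move=> clY usc clU [y u] clp.
have Yy : Y y.
  apply: clY => B By.
  have BT : nbhs (y, u) (B `*` setT).
    by exists (B, setT) => //; split => //; exact: filterT.
  by have [[y' u'] [[/= Yy' _] [/= By' _]]] := clp _ BT; exists y'.
split => //=; apply: contrapT => nUu.
have /nbhs_ballP[e /= e0 be] : nbhs u (~` U y).
  by apply: open_nbhs_nbhs; split => //; apply: closed_openC; exact: clU.
have e20 : 0 < e / 2 by rewrite divr_gt0.
pose V := ~` closure (ball u (e / 2)).
have UV : U y `<=` V.
  move=> v Uv /(_ _ (nbhsx_ballx v _ e20))[w [uw vw]].
  by apply: (be v) Uv; rewrite (splitr e); apply: (ball_triangle uw); exact: ball_sym.
have Vy := usc y Yy V (closed_openC (@closed_closure _ _)) UV.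
have VB : nbhs (y, u) ([set y' | Y y' -> U y' `<=` V] `*` ball u (e / 2)).
  exists ([set y' | Y y' -> U y' `<=` V], ball u (e / 2)) => //.
  by split => //; exact: nbhsx_ballx.
have [[y' u'] [[/= Yy' Uu'] [/= Vy' uu']]] := clp _ VB.
by apply: (Vy' Yy' u' Uu'); exact: subset_closure.
Qed.

End ProductSpace.

Lemma dbarstar_eq_dstar (R : realType) (m : nat) (U0 : pseudoPMetricType R)
    (Y : set 'rV[R]_m) (U : 'rV[R]_m -> set U0)
    (f : 'rV[R]_m * U0 -> 'rV[R]_m) (k : 'rV[R]_m * U0 -> R) theta y0 :
  dbarstar Y U f k theta y0 = dstar Y U f k theta y0.
Proof.
rewrite /dbarstar /dstar; congr ereal_sup; apply/seteqP; split.
  move=> _ [psi [eta [cpsi [ceta H]]] <-].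
  exists (psi y0) => //; exists psi, eta; do 2 split => //.
  by move=> p Gp; have [H1 H2] := H p Gp; split => //; lra.
move=> _ [mu [psi [eta [cpsi [ceta H]]]] <-].
exists (fun y => psi y - psi y0 + mu); last by rewrite subrr add0r.
exists eta; split; last split => //.
  by move=> y; apply: cvgD; [apply: cvgD; [exact: cpsi|exact: cvg_cst]|exact: cvg_cst].
by move=> p Gp; have [H1 H2] := H p Gp; split; lra.
Qed.

Section WeakDuality.
Variables (R : realType) (m : nat) (U0 : pseudoPMetricType R).
Variables (Y : set 'rV[R]_m) (U : 'rV[R]_m -> set U0).
Variables (f : 'rV[R]_m * U0 -> 'rV[R]_m) (k : 'rV[R]_m * U0 -> R).
Hypotheses (cY : compact Y) (hU0 : hausdorff_space U0) (cU0 : compact [set: U0]).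
Hypotheses (uscU : usc_on Y U) (cU : forall y, Y y -> compact (U y)).
Hypotheses (cf : continuous f) (ck : continuous k).
Local Notation X := (@X R m U0).
Local Notation BX := (@BX R m U0).
Local Notation G := (Gset Y U f).

Lemma Gset_fst p : G p -> Y p.1.
Proof. by case. Qed.

Lemma Gset_f p : G p -> Y (f p).
Proof. by case: p => y u [_ []]. Qed.

Lemma Gset_closed : closed (G : set X).
Proof.
have clY : closed Y by apply: compact_closed => //; exact: norm_hausdorff.
have -> : (G : set X) = [set p | Y p.1 /\ U p.1 p.2] `&` f @^-1` Y.
  by apply/seteqP; split => -[y u]; rewrite /Gset /Aset /=; tauto.
apply: closedI.
  by apply: usc_graph_closed => // y Yy; exact: compact_closed (cU Yy).
by apply: preimage_closed => // p _; exact: cf.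
Qed.

Lemma measurable_Gset : measurable G.
Proof. exact: measurable_closed Gset_closed. Qed.
Local Hint Resolve measurable_Gset : core.

Lemma integrable_Gset_k (mu : {finite_measure set BX -> \bar R}) :
  mu.-integrable G (fun p => (k p)%:E).
Proof.
have [M kM] :=
  compact_continuous_bounded (compact_setX cY cU0) (continuous_subspaceT ck).
apply: (@integrable_bounded _ _ _ _ _ _ M measurable_Gset).
  exact: measurable_fun_comp_within measurable_Gset (fun p => cvg_id) _
    (continuous_subspaceT ck).
by case=> y u [Yy _]; apply: kM.
Qed.

Lemma integrable_Gset_cst (mu : {finite_measure set BX -> \bar R}) (r : R) :
  mu.-integrable G (fun=> r%:E).
Proof.
by apply: (@integrable_bounded _ _ _ _ _ (fun=> r) `|r| measurable_Gset).
Qed.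

Lemma integrable_Gset_diff (mu : {finite_measure set BX -> \bar R})
    (h1 h2 : X -> 'rV[R]_m) (phi : 'rV[R]_m -> R) :
  continuous h1 -> continuous h2 ->
  (forall p, G p -> Y (h1 p)) -> (forall p, G p -> Y (h2 p)) -> contY Y phi ->
  mu.-integrable G (fun p => (phi (h1 p) - phi (h2 p))%:E).
Proof.
move=> ch1 ch2 Gh1 Gh2 cphi; have [M phiM] := compact_continuous_bounded cY cphi.
apply: (@integrable_bounded _ _ _ _ _ _ (M + M) measurable_Gset).
  apply: measurable_realfun.measurable_funB;
  exact: measurable_fun_comp_within measurable_Gset _ _ cphi.
by move=> p Gp; apply: le_trans (ler_normB _ _) _; apply: lerD; apply: phiM; auto.
Qed.

Lemma weak_duality (y0 : 'rV[R]_m) (theta mu : R) (psi eta : 'rV[R]_m -> R)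
    (g : probability BX R) (xi : {finite_measure set BX -> \bar R}) :
  Y y0 -> contY Y psi -> contY Y eta ->
  (forall p, G p -> 0 <= k p + psi y0 - psi p.1 + eta (f p) - eta p.1 - mu /\
                    - theta <= psi (f p) - psi p.1) ->
  inOmega Y U f y0 g xi ->
  (mu%:E <= \int[g]_(p in G) (k p)%:E + theta%:E * xi G)%E.
Proof.
move=> Yy0 cpsi ceta feas [[gG Wg] [_ Om]].
have cfst : continuous (fst : X -> 'rV[R]_m) by move=> p; exact: cvg_fst.
have ik := integrable_Gset_k g.
have ipsi0 :=
  integrable_Gset_diff g (@cst_continuous _ _ y0) cfst (fun _ _ => Yy0) Gset_fst cpsi.
have ieta := integrable_Gset_diff g cf cfst Gset_f Gset_fst ceta.
have ipsi := integrable_Gset_diff xi cf cfst Gset_f Gset_fst cpsi.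
have gG1 : g G = 1%E := probability_setC0 measurable_Gset gG.
have -> : (mu%:E = \int[g]_(p in G) mu%:E)%E.
  by rewrite integral_cst // -[LHS]mule1; congr (_ * _)%E; exact/esym/gG1.
apply: (@le_trans _ _ (\int[g]_(p in G) ((k p)%:E + (psi y0 - psi p.1)%:E
                                        + (eta (f p) - eta p.1)%:E))%E).
  apply: le_integral => //; first exact: integrable_Gset_cst.
    exact: (integrableD measurable_Gset (integrableD measurable_Gset ik ipsi0) ieta).
  move=> p /set_mem Gp; rewrite -!EFinD lee_fin.
  by have [feas1 _] := feas p Gp; lra.
rewrite integralD //; last exact: (integrableD measurable_Gset ik ipsi0).
rewrite integralD // (Wg eta ceta) adde0 leeD2l //.
rewrite -[X in (X <= _)%E](addeK _ (integrable_fin_num measurable_Gset ipsi)).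
rewrite (Om psi cpsi) sub0e.
rewrite leeNl -mulNe -EFinN -integral_cst //.
apply: le_integral => //; first exact: integrable_Gset_cst.
by move=> p /set_mem Gp; rewrite lee_fin; case: (feas p Gp).
Qed.

Lemma dstar_le_kstar (y0 : 'rV[R]_m) (theta : R) :
  Y y0 -> (dstar Y U f k theta y0 <= kstar Y U f k theta y0)%E.
Proof.
move=> Yy0; apply: ge_ereal_sup => _ [mu [psi [eta [cpsi [ceta feas]]]] <-].
apply: le_ereal_inf_tmp => _ [g [xi [Om ->]]].
exact: weak_duality Yy0 cpsi ceta feas Om.
Qed.

End WeakDuality.

Theorem lemma5p3 (R : realType) (m : nat) (U0 : pseudoPMetricType R)
  (Y : set 'rV[R]_m) (U : 'rV[R]_m -> set U0)
  (f : 'rV[R]_m * U0 -> 'rV[R]_m) (k : 'rV[R]_m * U0 -> R) :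
  Y !=set0 -> compact Y ->
  hausdorff_space U0 -> compact [set: U0] ->
  usc_on Y U -> (forall y, Y y -> compact (U y)) ->
  continuous f -> continuous k ->
  (forall y, Y y -> Aset Y U f y !=set0) ->
  forall (y0 : 'rV[R]_m) (theta : R), Y y0 -> 0 <= theta ->
    dbarstar Y U f k theta y0 = dstar Y U f k theta y0 /\
    (dstar Y U f k theta y0 <= kstar Y U f k theta y0)%E.
Proof.
move=> _ cY hU0 cU0 uscU cU cf ck _ y0 theta Yy0 _.
by split; [exact: dbarstar_eq_dstar | exact: dstar_le_kstar].
Qed.
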